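(* Let $S$ be a string of length $n$ over a totally ordered alphabet, with Lyndon array $\lambda$, and let $(i,j,p)$ be a decreasing run in $S$. Then there is exactly one index $i_0\in[i,i+p)$ such that $\lambda[i_0]=p$.
   Context: For $i\in[1,n+1]$, $S_i=S[i..n]$ is the suffix starting at $i$ ($S_{n+1}$ empty); $\prec$ is the lexicographical order induced by the alphabet order. A positive integer $p$ is a period of a nonempty substring $S[i..j]$ if $S[x]=S[x+p]$ for all $x\in[i,j-p]$. A run is a triple $(i,j,p)$ with $1\le i\le j\le n$ such that $p$ is the smallest period of $S[i..j]$, $j-i+1\ge 2p$, and neither $(i-1,j,p)$ (when $i>1$) nor $(i,j+1,p)$ (when $j<n$) satisfies these two properties. A run $(i,j,p)$ is decreasing if $S_i\succ S_{i+p}$. A Lyndon word is a nonempty string that is strictly lexicographically smaller than all of its non-trivial cyclic shifts. The Lyndon array is defined by $\lambda[i]=\max\{j-i+1 \mid j\in[i,n],\ S[i..j] \text{ is a Lyndon word}\}$ for $i\in[1,n]$. *)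

From mathcomp Require Import all_boot all_order.
Set Implicit Arguments. Unset Strict Implicit. Unset Printing Implicit Defensive.
Import Order.TTheory.

(* Strings are sequences over a totally ordered alphabet T : orderType d.
   Positions are 1-based as in the paper: S[x] = nth _ s (x-1). *)
Section Strings.
Context {d : Order.disp_t} {T : orderType d}.

(* strict lexicographic order induced by the alphabet order
   (a proper prefix is smaller), via MathComp's seqlexi *)
Definition lex_lt (u v : seq T) : bool := ((u : seqlexi T) < v)%O.

Definition suf (s : seq T) (i : nat) : seq T := drop i.-1 s.

(* S[i..j] (1-based, inclusive) *)
Definition substr (s : seq T) (i j : nat) : seq T := drop i.-1 (take j s).

Definition is_period (w : seq T) (p : nat) : Prop :=
  0 < p /\ forall (x0 : T) (x : nat), x + p < size w -> nth x0 w x = nth x0 w (x + p).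

Definition smallest_period (w : seq T) (p : nat) : Prop :=
  is_period w p /\ forall q, is_period w q -> p <= q.

Definition run_props (s : seq T) (i j p : nat) : Prop :=
  smallest_period (substr s i j) p /\ 2 * p <= j - i + 1.

Definition is_run (s : seq T) (i j p : nat) : Prop :=
  [/\ 1 <= i <= j, j <= size s, run_props s i j p,
      ~ (1 < i /\ run_props s i.-1 j p) &
      ~ (j < size s /\ run_props s i j.+1 p)].

Definition decreasing_run (s : seq T) (i j p : nat) : Prop :=
  is_run s i j p /\ lex_lt (suf s (i + p)) (suf s i).

Definition lyndon (w : seq T) : bool :=
  (0 < size w) && [forall k : 'I_(size w), (0 < k) ==> lex_lt w (rot k w)].

Definition lyndon_array (s : seq T) (i : nat) : nat :=
  \max_(i <= j < (size s).+1 | lyndon (substr s i j)) (j - i + 1).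

End Strings.

From mathcomp Require Import all_boot all_order zify.
Set Implicit Arguments. Unset Strict Implicit. Unset Printing Implicit Defensive.
Import Order.TTheory.

(* Let w = S[i..i+p-1] be the root of the run. Inside the run, the factors of
   length p starting at i, ..., i+p-1 are exactly the p rotations of w, and w is
   primitive because p is the smallest period; so exactly one of them, the least
   rotation, is a Lyndon word. No Lyndon factor starting in [i, i+p) is longer
   than p: if it ends inside the run it has period p, hence a border; if it
   crosses the end j of the run, then S[j+1] < S[j+1-p], which is what
   "decreasing" means, makes its rotation by p smaller than itself. So
   lambda[i0] = p holds exactly at the start of the Lyndon rotation. *)

Section LexOrder.
Context {d : Order.disp_t} {T : orderType d}.
Variable x0 : T.
Implicit Types (u v w x y : seq T).

Lemma lex_lt_asym u v : lex_lt u v -> lex_lt v u -> False.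
Proof. by rewrite /lex_lt => uv /(lt_trans uv); rewrite ltxx. Qed.

Lemma lex_lt_catl w x y : lex_lt (w ++ x) (w ++ y) = lex_lt x y.
Proof. by elim: w => //= c w IH; rewrite -IH /lex_lt /= eqhead_ltxiE. Qed.

Lemma lex_lt_catr_eqsize w x y :
  size x = size y -> lex_lt (x ++ w) (y ++ w) -> lex_lt x y.
Proof.
elim: x y => [|a x IH] [|c y] //= => [_|[/IH {}IH]]; first by rewrite /lex_lt ltxx.
rewrite /lex_lt /= !ltxi_cons => /andP[-> /implyP ltxy] /=.
by apply/implyP => /ltxy /IH.
Qed.

Lemma lex_lt_nth_le u v t0 :
  t0 < size u -> t0 < size v -> (forall t, t < t0 -> nth x0 u t = nth x0 v t) ->
  lex_lt u v -> (nth x0 u t0 <= nth x0 v t0)%O.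
Proof.
elim: t0 u v => [|t0 IH] [|a u] [|c v] //= => [_ _ _|ltu ltv eq_uv].
  by rewrite /lex_lt /= ltxi_cons => /andP[].
have /= eq_ac := eq_uv 0 isT; rewrite eq_ac /lex_lt /= eqhead_ltxiE.
by apply: IH => // t lt_t_t0; apply: (eq_uv t.+1).
Qed.

End LexOrder.

Section Lyndon.
Context {d : Order.disp_t} {T : orderType d}.
Variable x0 : T.
Implicit Types (w b : seq T).

Lemma nth_rot w k t : k <= size w -> t < size w ->
  nth x0 (rot k w) t = nth x0 w ((k + t) %% size w).
Proof.
move=> kw tw; rewrite /rot nth_cat size_drop.
case: ltnP => [lt_t | ge_t]; first by rewrite nth_drop modn_small //; lia.
rewrite nth_take; last lia.
have -> : k + t = t - (size w - k) + size w by lia.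
rewrite modnDr modn_small //; lia.
Qed.

Lemma rot_rot_mod w a k : a < size w -> k < size w ->
  rot k (rot a w) = rot ((k + a) %% size w) w.
Proof.
move=> aw kw; rewrite rot_add_mod; [|exact: ltnW..].
have [lt_ka | gt_ka | eq_ka] := ltngtP (k + a) (size w).
- by rewrite modn_small.
- have {2}-> : k + a = k + a - size w + size w by lia.
  rewrite modnDr modn_small //; lia.
- by rewrite eq_ka modnn rot_size rot0.
Qed.

Lemma lyndon_lt_rot w k : lyndon w -> 0 < k < size w -> lex_lt w (rot k w).
Proof.
case/andP=> _ /forallP lyn /andP[k_gt0 kw].
by have := lyn (Ordinal kw); rewrite /= k_gt0.
Qed.

Lemma lyndon_unbordered w b :
  lyndon w -> 0 < size b < size w -> prefix b w -> ~~ suffix b w.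
Proof.
move=> lyn /andP[b_gt0 bw] /prefixP[x wbx]; apply/negP => /suffixP[y wyb].
have size_w : size w = size b + size x by rewrite wbx size_cat.
have size_xy : size x = size y.
  by apply/eqP; rewrite -(eqn_add2l (size b)) -size_w wyb size_cat addnC.
have ltxy : lex_lt x y.
  rewrite -(lex_lt_catl b) -wbx -(rot_size_cat y b) -wyb.
  by apply: lyndon_lt_rot; lia.
have ltyx : lex_lt y x.
  apply: (lex_lt_catr_eqsize (w := b) (esym size_xy)).
  rewrite -wyb -(rot_size_cat b x) -wbx.
  by apply: lyndon_lt_rot; lia.
exact: lex_lt_asym ltxy ltyx.
Qed.

Lemma lyndon_not_period w q : lyndon w -> q < size w -> ~ is_period w q.
Proof.
move=> lyn qw [q_gt0 per].
have [y _] : exists y : T, True by case: (w) qw => // y; exists y.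
have border_prefix : prefix (drop q w) w.
  apply/prefixP; exists (drop (size w - q) w).
  rewrite -[w in LHS](cat_take_drop (size w - q)); congr (_ ++ _).
  apply: (@eq_from_nth _ y) => [|t]; first by rewrite size_takel ?size_drop ?leq_subr.
  rewrite size_takel ?leq_subr // => t_lt.
  by rewrite nth_take // nth_drop addnC per //; lia.
have border_suffix : suffix (drop q w) w.
  by apply/suffixP; exists (take q w); rewrite cat_take_drop.
have size_border : 0 < size (drop q w) < size w by rewrite size_drop; lia.
by move: (lyndon_unbordered lyn size_border border_prefix); rewrite border_suffix.
Qed.

Lemma lyndon_shift_le w p m : lyndon w -> 0 < p -> m + p < size w ->
  (forall t, t < m -> nth x0 w t = nth x0 w (t + p)) ->
  (nth x0 w m <= nth x0 w (m + p))%O.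
Proof.
move=> lyn p_gt0 mpw eq_shift.
have nth_rot_p t : t + p < size w -> nth x0 (rot p w) t = nth x0 w (t + p).
  by move=> tpw; rewrite nth_rot; [rewrite modn_small addnC|lia..].
rewrite -nth_rot_p //; apply: lex_lt_nth_le; rewrite ?size_rot; [lia|lia| |].
  move=> t tm; rewrite nth_rot_p; last lia.
  by rewrite eq_shift.
by apply: lyndon_lt_rot; lia.
Qed.

Lemma lyndon_rot_uniq w (a b : nat) : a < size w -> b < size w ->
  lyndon (rot a w) -> lyndon (rot b w) -> a = b.
Proof.
wlog lt_ab : a b / a < b.
  move=> W aw bw La Lb; case: (ltngtP a b) => [ab|ba|//]; first exact: W.
  exact/esym/W.
move=> aw bw La Lb; exfalso.
have rot_ab : rot (b - a) (rot a w) = rot b w by rewrite -rotD subnK //; exact: ltnW.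
have rot_ba : rot (size w - (b - a)) (rot b w) = rot a w.
  rewrite rot_rot_mod //; last lia.
  have -> : size w - (b - a) + b = a + size w by lia.
  by rewrite modnDr modn_small.
apply: (@lex_lt_asym _ _ (rot a w) (rot b w)).
- rewrite -[in X in lex_lt _ X]rot_ab; apply: lyndon_lt_rot => //.
  by rewrite size_rot; lia.
- rewrite -[in X in lex_lt _ X]rot_ba; apply: lyndon_lt_rot => //.
  by rewrite size_rot; lia.
Qed.

(* The least rotation is Lyndon; primitivity makes the comparisons strict. *)
Lemma exists_lyndon_rot w : 0 < size w ->
  (forall k, 0 < k < size w -> rot k w != w) ->
  exists2 a, a < size w & lyndon (rot a w).
Proof.
move=> w_gt0 primitive.
pose F (a : 'I_(size w)) : seqlexi T := rot a w.
case: (@arg_minP _ _ _ (Ordinal w_gt0) predT F isT) => a _ minF.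
exists a => //; rewrite /lyndon size_rot w_gt0.
apply/forallP => k; apply/implyP => k_gt0.
have kw : k < size w := ltn_ord k.
have le_rot : (F a <= rot k (rot a w) :> seqlexi T)%O.
  by rewrite rot_rot_mod //; apply: (minF (Ordinal (ltn_pmod _ w_gt0))).
rewrite /lex_lt lt_neqAle le_rot andbT; apply/eqP => eq_rot.
have /eqP[] : rot k w != w by apply: primitive; rewrite k_gt0.
by apply: (@rot_inj a); rewrite rot_rot -eq_rot.
Qed.

End Lyndon.

Section PeriodicWords.
Context {d : Order.disp_t} {T : orderType d}.
Variable x0 : T.
Implicit Types (w : seq T).

Lemma is_period_take w q n : is_period w q -> is_period (take n w) q.
Proof.
move=> [q_gt0 per]; split=> // y x; rewrite size_take_min => lt_x.
rewrite !nth_take; [apply: per|..]; lia.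
Qed.

Lemma is_period_drop w q n : is_period w q -> is_period (drop n w) q.
Proof.
move=> [q_gt0 per]; split=> // y x; rewrite size_drop => lt_x.
rewrite !nth_drop addnA; apply: per; lia.
Qed.

Lemma is_period_rcons w q c : is_period w q -> q <= size w ->
  nth x0 w (size w - q) = c -> is_period (rcons w c) q.
Proof.
move=> [q_gt0 per] qw last_c; split=> // y x; rewrite size_rcons ltnS => lt_x.
have x_lt : x < size w by lia.
rewrite !nth_rcons x_lt.
have [lt_xq | eq_xq] : x + q < size w \/ x + q = size w by lia.
  by rewrite lt_xq; apply: per.
rewrite eq_xq ltnn eqxx -last_c (set_nth_default y); last lia.
by congr nth; lia.
Qed.

Lemma nth_period_mod (y : T) w q x : is_period w q -> x < size w ->
  nth y w x = nth y w (x %% q).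
Proof.
move=> [q_gt0 per]; rewrite {1 2}(divn_eq x q) addnC.
move: (x %/ q) (x %% q) => m r; elim: m => [|m IH] lt_x; first by rewrite mul0n addn0.
rewrite mulSnr addnA -per; first by apply: IH; lia.
by rewrite -addnA -mulSnr.
Qed.

Lemma periodic_factor_rot w q a : is_period w q -> a <= q -> a + q <= size w ->
  take q (drop a w) = rot a (take q w).
Proof.
move=> per aq aqw; have q_gt0 : 0 < q by case: per.
have w_gt0 : 0 < size w by lia.
have [y _] : exists y : T, True by case: (w) w_gt0 => // y; exists y.
apply: (@eq_from_nth _ y) => [|t]; first by rewrite size_rot !size_takel ?size_drop; lia.
rewrite size_takel ?size_drop; last lia.
move=> tq; rewrite nth_take // nth_drop nth_rot ?size_takel; try lia.
rewrite nth_take ?ltn_pmod //; apply: (nth_period_mod y per); lia.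
Qed.

Lemma smallest_period_root_primitive w q k : smallest_period w q -> q <= size w ->
  0 < k < q -> rot k (take q w) != take q w.
Proof.
move=> [per minq] qw /andP[k_gt0 kq]; apply/eqP => rot_root.
have [q_gt0 _] := per.
suff /minq : is_period w k by lia.
split=> // y x xkw.
rewrite (nth_period_mod y per); last lia.
rewrite [RHS](nth_period_mod y per); last lia.
rewrite -(nth_take y (ltn_pmod x q_gt0)) -rot_root nth_rot ?size_takel //; try lia.
by rewrite nth_take ?ltn_pmod // modnDmr addnC.
Qed.

End PeriodicWords.

Section Substrings.
Context {d : Order.disp_t} {T : orderType d}.
Variable x0 : T.
Implicit Types (s : seq T).

Lemma size_substr s i k : k <= size s -> size (substr s i k) = k - i.-1.
Proof. by move=> ks; rewrite size_drop size_takel. Qed.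

Lemma nth_substr s i k t : k <= size s -> t < k - i.-1 ->
  nth x0 (substr s i k) t = nth x0 s (i.-1 + t).
Proof. by move=> ks tk; rewrite nth_drop nth_take //; lia. Qed.

Lemma substr_shift s i j a k : 0 < i -> (i + a).-1 <= k <= j ->
  substr s (i + a) k = take (k - (i + a).-1) (drop a (substr s i j)).
Proof.
move=> i_gt0 /andP[ik kj]; rewrite /substr drop_drop take_drop.
have -> : a + i.-1 = (i + a).-1 by lia.
by rewrite subnK // take_takel.
Qed.

Lemma substr_rcons s i j : i.-1 <= j < size s ->
  substr s i j.+1 = rcons (substr s i j) (nth x0 s j).
Proof.
move=> /andP[ij js]; rewrite /substr (take_nth x0) // drop_rcons //.
by rewrite size_takel // ltnW.
Qed.

Lemma bigmax_seq_witness (I : eqType) (r : seq I) (P : pred I) (F : I -> nat) :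
  0 < \max_(k <- r | P k) F k ->
  exists2 k, (k \in r) && P k & \max_(k <- r | P k) F k = F k.
Proof.
elim: r => [|h r IH]; first by rewrite big_nil.
have from_tail : 0 < \max_(k <- r | P k) F k ->
    exists2 k, (k \in h :: r) && P k & \max_(k <- r | P k) F k = F k.
  by case/IH => k /andP[kr Pk] ->; exists k; rewrite ?inE ?kr ?orbT.
rewrite big_cons; case: ifP => // Ph.
rewrite [maxn _ _]/maxn; case: (ltnP (F h)) => // _ _.
by exists h; rewrite ?inE ?eqxx ?Ph.
Qed.

Lemma leq_lyndon_array s i k : i <= k <= size s -> lyndon (substr s i k) ->
  k - i + 1 <= lyndon_array s i.
Proof.
move=> ik lyn; apply: (leq_bigmax_seq k) => //.
by rewrite mem_index_iota ltnS.
Qed.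

Lemma lyndon_array_le s i m :
  (forall k, i <= k <= size s -> lyndon (substr s i k) -> k - i + 1 <= m) ->
  lyndon_array s i <= m.
Proof.
move=> bound; apply/bigmax_leqP_seq => k.
by rewrite mem_index_iota ltnS; apply: bound.
Qed.

Lemma lyndon_array_witness s i : 0 < lyndon_array s i ->
  exists2 k, i <= k <= size s & lyndon (substr s i k) /\ lyndon_array s i = k - i + 1.
Proof.
case/bigmax_seq_witness => k /andP[]; rewrite mem_index_iota ltnS => ik lyn la_k.
by exists k.
Qed.

End Substrings.

Section RunEnd.
Context {d : Order.disp_t} {T : orderType d}.
Variable x0 : T.
Implicit Types (s : seq T).

Lemma run_props_rcons s i j p : 0 < i -> j < size s -> run_props s i j p ->
  nth x0 s j = nth x0 s (j - p) -> run_props s i j.+1 p.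
Proof.
move=> i_gt0 js [[per minp] twice] eq_next.
have [p_gt0 _] := per.
have size_run : size (substr s i j) = j - i.-1 by rewrite size_substr // ltnW.
split; last lia.
rewrite (substr_rcons x0); last by apply/andP; split; lia.
split.
- apply: (is_period_rcons (x0 := x0)) => //; first lia.
  rewrite size_run nth_substr ?eq_next; [|exact: ltnW|lia].
  by congr nth; lia.
- move=> q /(is_period_take (size (substr s i j))).
  by rewrite -cats1 take_size_cat //; apply: minp.
Qed.

(* S_{i+p} and S_i agree up to the end of the run, so S_{i+p} < S_i is decided
   by comparing S[j+1] with S[j+1-p]; equality would extend the run. *)
Lemma decreasing_run_next_lt s i j p : decreasing_run s i j p -> j < size s ->
  (nth x0 s j < nth x0 s (j - p))%O.
Proof.
move=> [[/andP[i_gt0 ij] js run _ not_right_ext] dec] j_lt.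
have [[[p_gt0 per] _] twice] := run.
have le_next : (nth x0 s j <= nth x0 s (j - p))%O.
  have -> : nth x0 s j = nth x0 (suf s (i + p)) (j - (i + p).-1).
    by rewrite nth_drop; congr nth; lia.
  have -> : nth x0 s (j - p) = nth x0 (suf s i) (j - (i + p).-1).
    by rewrite nth_drop; congr nth; lia.
  apply: lex_lt_nth_le; [rewrite size_drop; lia|rewrite size_drop; lia| |exact: dec].
  move=> t t_lt; rewrite !nth_drop.
  have t_run : t + p < size (substr s i j) by rewrite size_substr //; lia.
  rewrite -[RHS](@nth_substr _ _ x0 s i j) //; last lia.
  by rewrite per // nth_substr //; [congr nth|]; lia.
rewrite lt_neqAle le_next andbT; apply/negP => /eqP eq_next.
by apply: not_right_ext; split=> //; apply: run_props_rcons.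
Qed.

End RunEnd.

Section DecreasingRun.
Context {d : Order.disp_t} {T : orderType d}.
Variables (x0 : T) (s : seq T) (i j p : nat).
Hypotheses (i_gt0 : 0 < i) (j_le_size : j <= size s).
Hypothesis twice_p : 2 * p <= j - i + 1.
Hypothesis min_period : smallest_period (substr s i j) p.
(* 0-based: [nth x0 s j] is the letter S[j+1] following the run. *)
Hypothesis next_lt : j < size s -> (nth x0 s j < nth x0 s (j - p))%O.

Local Notation run := (substr s i j).
Local Notation root := (take p run).
Local Notation window a := (substr s (i + a) (i + a + p).-1).

Lemma run_period_gt0 : 0 < p.
Proof. by case: min_period => [[]]. Qed.

Lemma size_run : size run = j - i.-1.
Proof. exact: size_substr. Qed.

Lemma size_root : size root = p.
Proof. by rewrite size_takel // size_run; lia. Qed.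

Lemma run_shift y : i.-1 <= y -> y + p < j -> nth x0 s y = nth x0 s (y + p).
Proof.
move=> iy ypj; have [[_ per] _] := min_period.
have -> : y = i.-1 + (y - i.-1) by lia.
rewrite -addnA -!(@nth_substr _ _ x0 s i j) //; try lia.
by apply: per; rewrite size_run; lia.
Qed.

Lemma window_rot a : a < p -> window a = rot a root.
Proof.
move=> ap; have p_gt0 := run_period_gt0.
rewrite (substr_shift _ (j := j)) //; last lia.
have -> : (i + a + p).-1 - (i + a).-1 = p by lia.
by apply: periodic_factor_rot; [case: min_period | rewrite ?size_run; lia..].
Qed.

Lemma exists_lyndon_window : exists2 a, a < p & lyndon (window a).
Proof.
have [|k|a] := @exists_lyndon_rot _ _ root; rewrite size_root.
- exact: run_period_gt0.
- move=> kp; apply: smallest_period_root_primitive min_period _ kp.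
  by rewrite size_run; lia.
- by move=> ap lyn; exists a; rewrite ?window_rot.
Qed.

Lemma lyndon_window_uniq a b : a < p -> b < p ->
  lyndon (window a) -> lyndon (window b) -> a = b.
Proof.
by move=> ap bp; rewrite !window_rot //; apply: lyndon_rot_uniq; rewrite size_root.
Qed.

Lemma lyndon_factor_bound a k : a < p -> i + a <= k <= size s ->
  lyndon (substr s (i + a) k) -> k - (i + a) + 1 <= p.
Proof.
move=> ap /andP[aik ks] lyn; rewrite leqNgt; apply/negP => long.
have p_gt0 := run_period_gt0.
have size_L : size (substr s (i + a) k) = k - (i + a).-1 by rewrite size_substr.
have [kj | jk] := leqP k j.
- apply: (@lyndon_not_period _ _ _ p lyn); first by rewrite size_L; lia.
  rewrite (substr_shift _ (j := j)) //; last lia.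
  by apply/is_period_take/is_period_drop; case: min_period.
- set m := j - p - (i + a).-1.
  suff : (nth x0 s (j - p) <= nth x0 s j)%O.
    by rewrite leNgt next_lt //; exact: leq_trans ks.
  have nth_L t : t < k - (i + a).-1 ->
      nth x0 (substr s (i + a) k) t = nth x0 s ((i + a).-1 + t).
    exact: nth_substr.
  have -> : nth x0 s (j - p) = nth x0 (substr s (i + a) k) m.
    by rewrite nth_L; [congr nth|]; lia.
  have -> : nth x0 s j = nth x0 (substr s (i + a) k) (m + p).
    by rewrite nth_L; [congr nth|]; lia.
  apply: lyndon_shift_le lyn p_gt0 _ _; first by rewrite size_L; lia.
  move=> t tm; rewrite !nth_L; try lia.
  by rewrite addnA run_shift //; lia.
Qed.

Lemma lyndon_array_windowE a : a < p ->
  lyndon_array s (i + a) = p <-> lyndon (window a).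
Proof.
move=> ap; have p_gt0 := run_period_gt0; split.
- move=> la; have [|k /andP[aik ks] [lyn la_k]] := @lyndon_array_witness _ _ s (i + a).
    by rewrite la.
  by have -> : (i + a + p).-1 = k by lia.
- move=> lyn; apply/eqP; rewrite eqn_leq; apply/andP; split.
    by apply: lyndon_array_le => k; apply: lyndon_factor_bound.
  have -> : p = (i + a + p).-1 - (i + a) + 1 by lia.
  by apply: leq_lyndon_array lyn; lia.
Qed.

End DecreasingRun.

Theorem lemma7 (d : Order.disp_t) (T : orderType d) (s : seq T) (i j p : nat) :
  decreasing_run s i j p ->
  exists! i0 : nat, (i <= i0 < i + p)%N /\ lyndon_array s i0 = p.
Proof.
move=> run; have [[/andP[i_gt0 ij] j_le [min_p twice] _ _] _] := run.
have s_gt0 : 0 < size s by lia.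
have [x0 _] : exists x0 : T, True by case: (s) s_gt0 => // x0; exists x0.
have next_lt := decreasing_run_next_lt x0 run.
have windowE := lyndon_array_windowE i_gt0 j_le twice min_p next_lt.
have [a ap lyn_a] := exists_lyndon_window i_gt0 j_le twice min_p next_lt.
exists (i + a); split.
  by split; [rewrite leq_addr ltn_add2l | apply/windowE].
move=> i0 [/andP[ii0 i0p] la_i0].
have i0E : i0 = i + (i0 - i) by lia.
have bp : i0 - i < p by lia.
rewrite i0E; congr (_ + _).
apply: (lyndon_window_uniq i_gt0 j_le twice min_p next_lt ap bp lyn_a).
by apply/(windowE _ bp); rewrite -i0E.
Qed.
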